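(* Let $(X,\rho)$ be a complete locally compact $\mathbb R$-tree. For any two rooted orders $\sigma,\tau\in\mathcal O_+^r(X)$, the Hausdorff distance $\operatorname{Hd}(\sigma,\tau)$ (with respect to the sum metric $d_+$ on $X\times X$) is finite and equals $\rho(x,y)$, where $x$ is the root of $\tau$ and $y$ is the root of $\sigma$.
   Context: An $\mathbb R$-tree is a geodesic metric space in which any two points are joined by a unique segment and $[xy]\subset[xz]\cup[zy]$ for all $x,y,z$. $\mathcal O_+(X)$ is the set of partial orders $\tau$ on $X$ such that any two points have a supremum $x\vee y$, $x\,\tau\, z\,\tau\, y$ implies $\rho(x,z)+\rho(z,y)=\rho(x,y)$, $\rho(x,y)=\rho(x,x\vee y)+\rho(x\vee y,y)$ for all $x,y$, and every upper cone $\{y: x\,\tau\, y\}$ is linearly ordered. $\mathcal O_+^r(X)$ consists of those having a greatest element (root). Orders are regarded as subsets of $X\times X$ with metric $d_+((x_1,x_2),(y_1,y_2))=\rho(x_1,y_1)+\rho(x_2,y_2)$, and $\operatorname{Hd}(V,W)=\inf\{\varepsilon>0: V\subset\mathcal N_\varepsilon(W), W\subset\mathcal N_\varepsilon(V)\}$, $\mathcal N_\varepsilon$ denoting open $\varepsilon$-neighbourhoods in $d_+$. *)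

From Stdlib Require Import Reals Lra List.
Open Scope R_scope.

Definition is_metric {X : Type} (rho : X -> X -> R) : Prop :=
  (forall x y, 0 <= rho x y) /\
  (forall x y, rho x y = 0 <-> x = y) /\
  (forall x y, rho x y = rho y x) /\
  (forall x y z, rho x z <= rho x y + rho y z).

Definition ball {X : Type} (rho : X -> X -> R) (x : X) (r : R) : X -> Prop :=
  fun y => rho x y < r.

Definition is_open {X : Type} (rho : X -> X -> R) (U : X -> Prop) : Prop :=
  forall x, U x -> exists r, 0 < r /\ forall y, ball rho x r y -> U y.

Definition is_compact {X : Type} (rho : X -> X -> R) (K : X -> Prop) : Prop :=
  forall (I : Type) (U : I -> X -> Prop),
    (forall i, is_open rho (U i)) ->
    (forall x, K x -> exists i, U i x) ->
    exists l : list I, forall x, K x -> exists i, In i l /\ U i x.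

Definition locally_compact {X : Type} (rho : X -> X -> R) : Prop :=
  forall x, exists K, is_compact rho K /\
    exists r, 0 < r /\ forall y, ball rho x r y -> K y.

Definition cauchy_seq {X : Type} (rho : X -> X -> R) (u : nat -> X) : Prop :=
  forall eps, 0 < eps -> exists N, forall m n, (N <= m)%nat -> (N <= n)%nat ->
    rho (u m) (u n) < eps.

Definition converges_to {X : Type} (rho : X -> X -> R) (u : nat -> X) (l : X) : Prop :=
  forall eps, 0 < eps -> exists N, forall n, (N <= n)%nat -> rho (u n) l < eps.

Definition complete {X : Type} (rho : X -> X -> R) : Prop :=
  forall u, cauchy_seq rho u -> exists l, converges_to rho u l.

Definition is_geodesic {X : Type} (rho : X -> X -> R) (x y : X) (g : R -> X) : Prop :=
  g 0 = x /\ g (rho x y) = y /\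
  forall s t, 0 <= s <= rho x y -> 0 <= t <= rho x y -> rho (g s) (g t) = Rabs (s - t).

Definition image_on {X : Type} (g : R -> X) (d : R) : X -> Prop :=
  fun z => exists t, 0 <= t <= d /\ g t = z.

Definition segment {X : Type} (rho : X -> X -> R) (x y : X) : X -> Prop :=
  fun z => exists g, is_geodesic rho x y g /\ image_on g (rho x y) z.

Definition is_Rtree {X : Type} (rho : X -> X -> R) : Prop :=
  is_metric rho /\
  (forall x y, exists g, is_geodesic rho x y g) /\
  (forall x y g1 g2, is_geodesic rho x y g1 -> is_geodesic rho x y g2 ->
     forall z, image_on g1 (rho x y) z <-> image_on g2 (rho x y) z) /\
  (forall x y z w, segment rho x y w -> segment rho x z w \/ segment rho z y w).

Definition is_sup {X : Type} (tau : X -> X -> Prop) (x y s : X) : Prop :=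
  tau x s /\ tau y s /\ forall u, tau x u -> tau y u -> tau s u.

Definition partial_order {X : Type} (tau : X -> X -> Prop) : Prop :=
  (forall x, tau x x) /\
  (forall x y, tau x y -> tau y x -> x = y) /\
  (forall x y z, tau x y -> tau y z -> tau x z).

Definition O_plus {X : Type} (rho : X -> X -> R) (tau : X -> X -> Prop) : Prop :=
  partial_order tau /\
  (forall x y, exists s, is_sup tau x y s) /\
  (forall x z y, tau x z -> tau z y -> rho x z + rho z y = rho x y) /\
  (forall x y s, is_sup tau x y s -> rho x y = rho x s + rho s y) /\
  (forall x a b, tau x a -> tau x b -> tau a b \/ tau b a).

Definition is_root {X : Type} (tau : X -> X -> Prop) (r : X) : Prop :=
  forall x, tau x r.

Definition O_plus_r {X : Type} (rho : X -> X -> R) (tau : X -> X -> Prop) : Prop :=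
  O_plus rho tau /\ exists r, is_root tau r.

Definition d_plus {X : Type} (rho : X -> X -> R) (p q : X * X) : R :=
  rho (fst p) (fst q) + rho (snd p) (snd q).

Definition nbhd {X : Type} (rho : X -> X -> R) (eps : R) (W : X * X -> Prop) : X * X -> Prop :=
  fun p => exists q, W q /\ d_plus rho p q < eps.

Definition subset {A : Type} (V W : A -> Prop) : Prop := forall a, V a -> W a.

Definition Hd_set {X : Type} (rho : X -> X -> R) (V W : X * X -> Prop) : R -> Prop :=
  fun eps => 0 < eps /\ subset V (nbhd rho eps W) /\ subset W (nbhd rho eps V).

Definition is_glb (E : R -> Prop) (m : R) : Prop :=
  (forall e, E e -> m <= e) /\ (forall m', (forall e, E e -> m' <= e) -> m' <= m).

(* Hd(V,W) is finite and equals h *)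
Definition Hd_is {X : Type} (rho : X -> X -> R) (V W : X * X -> Prop) (h : R) : Prop :=
  (exists eps, Hd_set rho V W eps) /\ is_glb (Hd_set rho V W) h.

Definition graph {X : Type} (tau : X -> X -> Prop) : X * X -> Prop :=
  fun p => tau (fst p) (snd p).

From Stdlib Require Import Reals Lra.
Open Scope R_scope.

(* If a <=_sigma b, let s be the tau-join of a and b, so (a, s) lies in tau at
   d_+-distance rho(b, s) from (a, b).  Splitting rho(a, y) along
   a <=_sigma b <=_sigma y and rho(a, x), rho(b, x) along a, b <=_tau s <=_tau x,
   the triangle inequalities for rho(a, y) and rho(b, x) add up to
   rho(b, s) <= rho(x, y); by symmetry Hd <= rho(x, y).  Conversely
   (x, y) lies in sigma, and for (a, b) in tau we have b <=_tau x, hence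
   rho(b, x) <= rho(a, x) and rho(x, y) <= rho(x, a) + rho(b, y). *)

Section Metric.

Context {X : Type} {rho : X -> X -> R} (Hrho : is_metric rho).

Lemma metric_ge0 a b : 0 <= rho a b.
Proof. destruct Hrho as [H _]; apply H. Qed.

Lemma metric_self a : rho a a = 0.
Proof. destruct Hrho as [_ [H _]]; now apply H. Qed.

Lemma metric_sym a b : rho a b = rho b a.
Proof. destruct Hrho as [_ [_ [H _]]]; apply H. Qed.

Lemma metric_triangle a b c : rho a c <= rho a b + rho b c.
Proof. destruct Hrho as [_ [_ [_ H]]]; apply H. Qed.

Lemma d_plus_same_fst a b c : d_plus rho (a, b) (a, c) = rho b c.
Proof. unfold d_plus; simpl; rewrite metric_self; ring. Qed.

End Metric.

Section Orders.

Context {X : Type} {rho : X -> X -> R} {tau : X -> X -> Prop} (Htau : O_plus rho tau).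

Lemma O_plus_join_exists a b : exists s, is_sup tau a b s.
Proof. destruct Htau as [_ [H _]]; apply H. Qed.

Lemma O_plus_between {a b c} : tau a b -> tau b c -> rho a b + rho b c = rho a c.
Proof. destruct Htau as [_ [_ [H _]]]; apply H. Qed.

Lemma O_plus_join_between {a b s} : is_sup tau a b s -> rho a b = rho a s + rho s b.
Proof. destruct Htau as [_ [_ [_ [H _]]]]; apply H. Qed.

Lemma O_plus_root_dist_le {r a b} :
  is_metric rho -> is_root tau r -> tau a b -> rho b r <= rho a r.
Proof.
  intros Hrho Hr Hab.
  rewrite <- (O_plus_between Hab (Hr b)).
  pose proof (metric_ge0 Hrho a b); lra.
Qed.

End Orders.

Section TwoRootedOrders.

Context {X : Type} {rho : X -> X -> R} {sigma tau : X -> X -> Prop}.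
Context (Hrho : is_metric rho) (Hsigma : O_plus rho sigma) (Htau : O_plus rho tau).
Context {x y : X} (Hx : is_root tau x) (Hy : is_root sigma y).

Lemma O_plus_join_near a b :
  sigma a b -> exists s, tau a s /\ rho b s <= rho x y.
Proof.
  intros Hab.
  destruct (O_plus_join_exists Htau a b) as [s Hs].
  pose proof Hs as [Has [Hbs _]].
  exists s; split; [exact Has |].
  assert (Eab := O_plus_join_between Htau Hs).
  assert (Eay := O_plus_between Hsigma Hab (Hy b)).
  assert (Eax := O_plus_between Htau Has (Hx s)).
  assert (Ebx := O_plus_between Htau Hbs (Hx s)).
  assert (Tay := metric_triangle Hrho a x y).
  assert (Tbx := metric_triangle Hrho b y x).
  rewrite (metric_sym Hrho s b), (metric_sym Hrho y x) in *.
  lra.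
Qed.

Lemma graph_subset_nbhd {eps} :
  rho x y < eps -> subset (graph sigma) (nbhd rho eps (graph tau)).
Proof.
  intros Heps [a b] Hab.
  destruct (O_plus_join_near a b Hab) as [s [Has Hbs]].
  exists (a, s); split; [exact Has |].
  rewrite d_plus_same_fst by exact Hrho; lra.
Qed.

Lemma root_pair_nbhd_lt {eps} : nbhd rho eps (graph tau) (x, y) -> rho x y < eps.
Proof.
  intros [[a b] [Hab Hd]]; unfold graph, d_plus in *; simpl in *.
  assert (Hbx := O_plus_root_dist_le Htau Hrho Hx Hab).
  assert (Txy := metric_triangle Hrho x b y).
  rewrite (metric_sym Hrho x a), (metric_sym Hrho x b), (metric_sym Hrho y b) in *.
  lra.
Qed.

End TwoRootedOrders.

Lemma is_glb_of_open_ray (E : R -> Prop) (h : R) :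
  (forall e, h < e -> E e) -> (forall e, E e -> h <= e) -> is_glb E h.
Proof.
  intros Hray Hlow; split; [exact Hlow |].
  intros m Hm.
  destruct (Rle_or_lt m h) as [Hle | Hlt]; [exact Hle |].
  assert (Hmid : h < (h + m) / 2) by lra.
  specialize (Hm _ (Hray _ Hmid)); lra.
Qed.

Theorem lemma1 (X : Type) (rho : X -> X -> R)
  (Htree : is_Rtree rho) (Hcomp : complete rho) (Hlc : locally_compact rho)
  (sigma tau : X -> X -> Prop)
  (Hs : O_plus_r rho sigma) (Ht : O_plus_r rho tau)
  (x y : X) (Hx : is_root tau x) (Hy : is_root sigma y) :
  Hd_is rho (graph sigma) (graph tau) (rho x y).
Proof.
  destruct Htree as [Hrho _], Hs as [Hs _], Ht as [Ht _].
  assert (Hray : forall e, rho x y < e -> Hd_set rho (graph sigma) (graph tau) e).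
  { intros e He; split; [pose proof (metric_ge0 Hrho x y); lra |]; split.
    - exact (graph_subset_nbhd Hrho Hs Ht Hx Hy He).
    - rewrite (metric_sym Hrho x y) in He.
      exact (graph_subset_nbhd Hrho Ht Hs Hy Hx He). }
  split.
  - exists (rho x y + 1); apply Hray; lra.
  - apply is_glb_of_open_ray; [exact Hray |].
    intros e [_ [Hsub _]].
    apply Rlt_le, (root_pair_nbhd_lt Hrho Ht Hx), Hsub, Hy.
Qed.
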